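(* Let $n\ge1$, let $\varrho:[0,1]\to[0,\infty)$ be integrable with $\int_0^1\varrho(x)\,dx=1$, and let the angles $\theta_w$ and $\theta=\theta_\emptyset$ be as defined in the context. Define $\mathsf{U}_1:=\mathsf{I}_{2^{n-1}}\otimes\mathsf{R}(\theta)$ and, for $2\le j\le n$, \[ \mathsf{U}_j:=\prod_{w\in\{0,1\}^{j-1}}\Bigl(\mathsf{I}_{2^{n-j}}\otimes \mathsf{CC}^{(1)}_w\bigl(\mathsf{R}(\theta_w)\bigr)\Bigr), \] and let $|\psi_j\rangle:=\mathsf{U}_j\mathsf{U}_{j-1}\cdots\mathsf{U}_1|0\rangle^{\otimes n}$. Then for every $1\le j\le n$, \[ |\psi_j\rangle=|0\rangle^{\otimes(n-j)}\otimes\sum_{w=z_{n-j+1}\cdots z_n\in\{0,1\}^j}\Bigl(\mathsf{T}_{z_{n-j+1}}(\theta_{z_{n-j+2}\cdots z_n})\cdots\mathsf{T}_{z_{n-1}}(\theta_{z_n})\,\mathsf{T}_{z_n}(\theta)\Bigr)|w\rangle . \] In particular, $|\psi_n\rangle=\sum_{z_1\cdots z_n\in\{0,1\}^n}\bigl(\mathsf{T}_{z_1}(\theta_{z_2\cdots z_n})\cdots\mathsf{T}_{z_n}(\theta)\bigr)|z_1\cdots z_n\rangle$.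
   Context: The $n$-qubit space is $(\mathbb{C}^2)^{\otimes n}$ with basis $|z_1\cdots z_n\rangle=|z_1\rangle\otimes\cdots\otimes|z_n\rangle$ (qubit $1$ leftmost). $\mathsf{R}(\alpha)=\begin{pmatrix}\cos\alpha&-\sin\alpha\\ \sin\alpha&\cos\alpha\end{pmatrix}$, and $\mathsf{I}_d$ is the $d\times d$ identity. For $w\in\{0,1\}^{j-1}$, $\mathsf{CC}^{(1)}_w(U)\in\mathrm{U}(2^j)$ is the unitary on $j$ qubits that applies the one-qubit unitary $U$ to the first of these $j$ qubits if the remaining $j-1$ qubits are in the basis state $|w\rangle$, and acts as the identity on all other computational basis states; thus $\mathsf{I}_{2^{n-j}}\otimes\mathsf{CC}^{(1)}_w(U)$ acts on qubit $n-j+1$ controlled by qubits $n-j+2,\dots,n$. For a word $w=z_1\cdots z_m\in\{0,1\}^m$ ($m\ge0$) let $k(w)=\sum_{r=1}^m z_r2^{r-1}$, $I_w=[k(w)/2^m,(k(w)+1)/2^m]$, $p_w=\int_{I_w}\varrho(x)\,dx$; $0w,1w$ denote prepending a bit. For words $w$ of length $0\le m\le n-1$, $\theta_w\in[0,\pi/2]$ is defined by $\cos^2\theta_w=p_{0w}/p_w$, $\sin^2\theta_w=p_{1w}/p_w$ if $p_w>0$, and $\theta_w:=0$ if $p_w=0$; $\theta:=\theta_\emptyset$. For $z\in\{0,1\}$, $\mathsf{T}_z(x):=(\cos x)^{1-z}(\sin x)^z$. *)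

From HB Require Import structures.
From mathcomp Require Import all_boot all_order all_algebra.
From mathcomp.real_closed Require Import complex mxtens.
From mathcomp Require Import all_classical all_reals all_analysis.

Set Implicit Arguments.
Unset Strict Implicit.
Unset Printing Implicit Defensive.

Import Order.TTheory GRing.Theory Num.Theory.
Local Open Scope ring_scope.

Section QState.
Variable R : realType.
Local Notation C := (R[i]).

(* one-qubit basis vector |b>, b = false ~ |0>, b = true ~ |1> *)
Definition qb (b : bool) : 'cV[C]_2 := \col_(i < 2) ((i == b :> nat)%:R).

(* |z_1 ... z_j> = |z_1> (x) ... (x) |z_j>  (qubit 1 leftmost) *)
Fixpoint ket (j : nat) : j.-tuple bool -> 'cV[C]_(2 ^ j) :=
  match j with
  | 0 => fun _ => const_mx 1
  | m.+1 => fun w =>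
      castmx (esym (expnS 2 m), muln1 1) (qb (thead w) *t ket (behead_tuple w))
  end.

Definition ket0s (j : nat) : 'cV[C]_(2 ^ j) := ket (nseq_tuple j false).

Definition Rot (a : R) : 'M[C]_2 :=
  \matrix_(i < 2, k < 2)
    (if (i : nat) == k then (cos a)%:C%C
     else if (i : nat) == 0%N then (- sin a)%:C%C else (sin a)%:C%C).

Definition proj (m : nat) (w : m.-tuple bool) : 'M[C]_(2 ^ m) :=
  ket w *m (ket w)^T.

(* CC^{(1)}_w(U) on m+1 qubits: U on the first qubit when the remaining m
   qubits are in |w>, identity otherwise:  U (x) |w><w| + I_2 (x) (I - |w><w|) *)
Definition CC (m : nat) (w : m.-tuple bool) (U : 'M[C]_2) : 'M[C]_(2 ^ m.+1) :=
  castmx (esym (expnS 2 m), esym (expnS 2 m))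
    (U *t proj w + (1%:M : 'M[C]_2) *t (1%:M - proj w)).

(* I_{2^{n-j}} (x) A, as a 2^n x 2^n matrix (meaningful for j <= n) *)
Definition embed (n j : nat) (A : 'M[C]_(2 ^ j)) : 'M[C]_(2 ^ n) :=
  conform_mx 1%:M ((1%:M : 'M[C]_(2 ^ (n - j))) *t A).

End QState.
Arguments embed {R} n j A.

Section Angles.
Variable R : realType.
Local Notation C := (R[i]).

(* k(w) = sum_r z_r 2^(r-1)  (first letter least significant) *)
Definition kw (w : seq bool) : nat := \sum_(r < size w) (nth false w r) * 2 ^ r.

Definition pw (rho : R -> R) (w : seq bool) : R :=
  fine (\int[@lebesgue_measure R]_(x in
          `[((kw w)%:R / 2 ^+ size w)%R, ((kw w).+1%:R / 2 ^+ size w)%R]%classic)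
          (rho x)%:E)%E.

(* theta_w in [0, pi/2] with cos^2 = p_{0w}/p_w, sin^2 = p_{1w}/p_w if p_w > 0,
   theta_w = 0 if p_w = 0 *)
Definition theta (rho : R -> R) (w : seq bool) : R :=
  if 0 < pw rho w then acos (Num.sqrt (pw rho (false :: w) / pw rho w)) else 0.

Definition Tz (z : bool) (x : R) : R := cos x ^+ (1 - z) * sin x ^+ z.

Definition Ugate (rho : R -> R) (n j : nat) : 'M[C]_(2 ^ n) :=
  match j with
  | 0 => 1%:M
  | 1 => embed n 1 (Rot (theta rho [::]))
  | m.+2 => \prod_(w : m.+1.-tuple bool) embed n m.+2 (CC w (Rot (theta rho w)))
  end.

Fixpoint psi (rho : R -> R) (n j : nat) : 'cV[C]_(2 ^ n) :=
  match j with
  | 0 => ket0s R n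
  | m.+1 => Ugate rho n m.+1 *m psi rho n m
  end.

Definition amp (rho : R -> R) (j : nat) (w : j.-tuple bool) : C :=
  \prod_(i < j) (Tz (tnth w i) (theta rho (drop i.+1 w)))%:C%C.

End Angles.

From Pilot Require Import Defs.
From HB Require Import structures.
From mathcomp Require Import all_boot all_order all_algebra.
From mathcomp.real_closed Require Import complex mxtens.
From mathcomp Require Import all_classical all_reals all_analysis.

(* The gate
   U_(j+1) is I (x) G acting on the last j+1 qubits, and G sends |0>|w> to
   (R(theta_w)|0>)|w> = sum_z T_z(theta_w) |z w>, which is exactly the
   recursion amp(z w) = T_z(theta_w) amp(w).  The identity is purely
   algebraic. *)

Set Implicit Arguments.
Unset Strict Implicit.
Unset Printing Implicit Defensive.

Import Order.TTheory GRing.Theory Num.Theory.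
Local Open Scope ring_scope.

Lemma conform_mxE (K : Type) m n m' n' (B : 'M[K]_(m', n')) (A : 'M[K]_(m, n))
    (em : m = m') (en : n = n') :
  conform_mx B A = castmx (em, en) A.
Proof.
by rewrite /conform_mx; case: eqP => // e1; case: eqP => // e2; apply: eq_castmx.
Qed.

Lemma big_tuple_cons (T : finType) (V : nmodType) m (F : m.+1.-tuple T -> V) :
  \sum_(w : m.+1.-tuple T) F w = \sum_(z : T) \sum_(w : m.-tuple T) F [tuple of z :: w].
Proof.
rewrite pair_big /=.
apply: (reindex (fun p : T * m.-tuple T => [tuple of p.1 :: p.2])).
exists (fun w => (thead w, behead_tuple w)) => [[z w] _ | w _] /=.
  by rewrite theadE; congr (_, _); apply: val_inj.
by case/tupleP: w => z w; apply: val_inj.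
Qed.

Section ColumnCoordinates.
Variable K : pzRingType.

(* Coordinates of a column vector, padded with zeros: they see through castmx
   and conform_mx, so vectors of provably equal dimensions can be compared. *)
Definition cvnth m (v : 'cV[K]_m) (i : nat) : K :=
  if insub i is Some k then v k 0 else 0.

Lemma cvnthE m (v : 'cV[K]_m) (k : 'I_m) : cvnth v k = v k 0.
Proof. by rewrite /cvnth valK. Qed.

Lemma cvnth_out m (v : 'cV[K]_m) i : (m <= i)%N -> cvnth v i = 0.
Proof. by move=> h; rewrite /cvnth insubF // ltnNge h. Qed.

Lemma cvnth_inj m (u v : 'cV[K]_m) : cvnth u =1 cvnth v -> u = v.
Proof. by move=> h; apply/matrixP=> i j; rewrite (ord1 j) -!cvnthE h. Qed.

Lemma cvnth_castmx m m' (e : (m = m') * (1 = 1)%N) (v : 'cV[K]_m) :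
  cvnth (castmx e v) =1 cvnth v.
Proof. by case: e => em e1; case: m' / em; rewrite (eq_axiomK e1) castmx_id. Qed.

Lemma cvnth_conform m m' (B : 'cV[K]_m') (A : 'cV[K]_m) :
  m = m' -> cvnth (conform_mx B A) =1 cvnth A.
Proof. by move=> em; rewrite (conform_mxE B A em erefl); apply: cvnth_castmx. Qed.

Lemma cvnth_const1 : cvnth (const_mx 1 : 'cV[K]_1) =1 fun i => (i == 0)%:R.
Proof.
by case=> [|i]; rewrite ?(cvnthE _ ord0) ?mxE ?cvnth_out.
Qed.

Lemma cvnth_tens a b (u : 'cV[K]_a) (v : 'cV[K]_b) i :
  cvnth (u *t v) i = cvnth u (i %/ b) * cvnth v (i %% b).
Proof.
have [hi|hi] := ltnP i (a * b).
  rewrite (cvnthE _ (Ordinal hi)) mxE /=.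
  by rewrite !(ord1 (Ordinal _)) -!cvnthE.
rewrite cvnth_out //; case: b v hi => [|b] v hi.
  by rewrite modn0 (cvnth_out v) ?mulr0.
by rewrite (cvnth_out u) ?mul0r // leq_divRL.
Qed.

Lemma cvnth_tens_e0 a b (e : 'cV[K]_a) (u : 'cV[K]_b) :
  cvnth e =1 (fun i => (i == 0)%:R) -> cvnth (e *t u) =1 cvnth u.
Proof.
move=> he i; rewrite cvnth_tens he.
have [hi|hi] := ltnP i b; first by rewrite divn_small // modn_small // mul1r.
case: b u hi => [|b] u hi; first by rewrite divn0 modn0 mul1r.
have : (0 < i %/ b.+1)%N by rewrite divn_gt0.
by rewrite lt0n => /negbTE ->; rewrite mul0r cvnth_out.
Qed.

Lemma cvnth_tensmx1 a (u : 'cV[K]_a) :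
  cvnth (u *t (const_mx 1 : 'cV[K]_1)) =1 cvnth u.
Proof. by move=> i; rewrite cvnth_tens divn1 modn1 cvnth_const1 mulr1. Qed.

End ColumnCoordinates.

Section CastTensor.
Variable K : pzRingType.

Lemma mulmx_castmx m m' n n' p p' (em : m = m') (en : n = n') (ep ep' : p = p')
    (A : 'M[K]_(m, p)) (B : 'M[K]_(p, n)) :
  castmx (em, ep) A *m castmx (ep', en) B = castmx (em, en) (A *m B).
Proof.
rewrite (eq_irrelevance ep' ep); clear ep'.
by case: m' / em; case: n' / en; case: p' / ep; rewrite !castmx_id.
Qed.

Lemma castmx1 m m' (e : m = m') : castmx (e, e) (1%:M : 'M[K]_m) = 1%:M.
Proof. by case: m' / e; rewrite castmx_id. Qed.

Lemma castmxZ m n m' n' (e : (m = m') * (n = n')) c (A : 'M[K]_(m, n)) :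
  castmx e (c *: A) = c *: castmx e A.
Proof. by apply/matrixP => i j; rewrite castmxE !mxE castmxE. Qed.

Lemma castmx_sum m n m' n' (e : (m = m') * (n = n')) (I : Type) (r : seq I)
    (P : pred I) (F : I -> 'M[K]_(m, n)) :
  castmx e (\sum_(i <- r | P i) F i) = \sum_(i <- r | P i) castmx e (F i).
Proof.
apply/matrixP => i j; rewrite castmxE !summxE.
by apply: eq_bigr => x _; rewrite castmxE.
Qed.

Lemma tensmx11 m n : (1%:M : 'M[K]_m) *t (1%:M : 'M[K]_n) = 1%:M.
Proof.
apply/matrixP => i j.
case: (mxtens_indexP i) => i1 i2; case: (mxtens_indexP j) => j1 j2.
rewrite tensmxE !mxE (inj_eq (can_inj (@mxtens_indexK _ _))) xpair_eqE.
by rewrite -natrM mulnb.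
Qed.

Lemma tensmxZl m n p q c (A : 'M[K]_(m, n)) (B : 'M[K]_(p, q)) :
  (c *: A) *t B = c *: (A *t B).
Proof. by apply/matrixP => i j; rewrite !mxE mulrA. Qed.

Lemma tensmx_suml m n p q (I : Type) (r : seq I) (P : pred I)
    (F : I -> 'M[K]_(m, n)) (B : 'M[K]_(p, q)) :
  (\sum_(i <- r | P i) F i) *t B = \sum_(i <- r | P i) F i *t B.
Proof.
apply/matrixP => i j; rewrite !mxE summxE mulr_suml summxE.
by apply: eq_bigr => x _; rewrite !mxE.
Qed.

Lemma tensmx_sumr m n p q (A : 'M[K]_(m, n)) (I : Type) (r : seq I) (P : pred I)
    (F : I -> 'M[K]_(p, q)) :
  A *t (\sum_(i <- r | P i) F i) = \sum_(i <- r | P i) A *t F i.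
Proof.
apply/matrixP => i j; rewrite !mxE summxE mulr_sumr summxE.
by apply: eq_bigr => x _; rewrite !mxE.
Qed.

End CastTensor.

Lemma tensmxZr (K : comPzRingType) m n p q c (A : 'M[K]_(m, n)) (B : 'M[K]_(p, q)) :
  A *t (c *: B) = c *: (A *t B).
Proof. by apply/matrixP => i j; rewrite !mxE mulrCA. Qed.

Lemma expn2_subnK n k : (k <= n)%N -> (2 ^ (n - k) * 2 ^ k = 2 ^ n)%N.
Proof. by move=> h; rewrite -expnD subnK. Qed.

Section Qubits.
Variable R : realType.
Local Notation C := R[i].
Local Notation qcast m := (castmx (esym (expnS 2 m), muln1 1)).

Lemma ket_cons m z (w : m.-tuple bool) :
  ket R [tuple of z :: w] = qcast m (qb R z *t ket R w).
Proof.
by rewrite /= theadE; congr (castmx _ (_ *t ket R _)); apply: val_inj.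
Qed.

Lemma ket0sS a : ket0s R a.+1 = qcast a (qb R false *t ket0s R a).
Proof.
rewrite /ket0s.
have -> : nseq_tuple a.+1 false = [tuple of false :: nseq_tuple a false].
  exact: val_inj.
exact: ket_cons.
Qed.

Lemma cvnth_qb b i : cvnth (qb R b) i = (i == b)%:R.
Proof.
have [hi|hi] := ltnP i 2; first by rewrite (cvnthE _ (Ordinal hi)) mxE.
by rewrite cvnth_out //; case: b; case: i hi => [|[|i]].
Qed.

Lemma cvnth_ket0s a : cvnth (ket0s R a) =1 fun i => (i == 0)%:R.
Proof.
elim: a => [|a IH] i; first exact: cvnth_const1.
by rewrite ket0sS cvnth_castmx (cvnth_tens_e0 _ (cvnth_qb false)) IH.
Qed.

Lemma cvnth_conform_ket0s n j (u : 'cV[C]_(2 ^ j)) : (j <= n)%N ->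
  cvnth (conform_mx (0 : 'cV[C]_(2 ^ n)) (ket0s R (n - j) *t u)) =1 cvnth u.
Proof.
move=> le_jn i.
by rewrite (cvnth_conform _ _ (expn2_subnK le_jn)) (cvnth_tens_e0 _ (cvnth_ket0s _)).
Qed.

Lemma conform_ket0s_tensS n j (u : 'cV[C]_(2 ^ j)) : (j < n)%N ->
  conform_mx (0 : 'cV[C]_(2 ^ n)) (ket0s R (n - j) *t u) =
  conform_mx (0 : 'cV[C]_(2 ^ n)) (ket0s R (n - j.+1) *t qcast j (qb R false *t u)).
Proof.
move=> lt_jn; apply: cvnth_inj => i.
rewrite !cvnth_conform_ket0s ?(ltnW lt_jn) // cvnth_castmx.
by rewrite (cvnth_tens_e0 _ (cvnth_qb false)).
Qed.

Lemma qb_orth z z' : (qb R z)^T *m qb R z' = (z == z')%:R%:M.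
Proof.
apply/matrixP => i k; rewrite !ord1 !mxE !big_ord_recl big_ord0 !mxE /=.
by case: z; case: z'; rewrite /= ?mulr0 ?mulr1 ?addr0 ?add0r.
Qed.

Lemma ket_orth j (w w' : j.-tuple bool) : (ket R w)^T *m ket R w' = (w == w')%:R%:M.
Proof.
elim: j w w' => [|j IH] w w'.
  rewrite (tuple0 w) (tuple0 w') eqxx.
  by apply/matrixP => i k; rewrite !ord1 !mxE big_ord1 !mxE mulr1.
case/tupleP: w => z w; case/tupleP: w' => z' w'.
rewrite !ket_cons trmx_cast mulmx_castmx trmx_tens tensmx_mul qb_orth IH.
have -> : ([tuple of z :: w] == [tuple of z' :: w']) = (z == z') && (w == w').
  by rewrite -[LHS]val_eqE /= eqseq_cons val_eqE.
apply/matrixP => i k; rewrite castmxE !mxE !ord1 /=.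
by case: (z == z'); case: (w == w'); rewrite ?mulr1 ?mulr0.
Qed.

Lemma proj_ket m (w w' : m.-tuple bool) :
  Defs.proj R w *m ket R w' = (w == w')%:R *: ket R w.
Proof. by rewrite /proj -mulmxA ket_orth mul_mx_scalar. Qed.

Lemma CC_ket m (w w' : m.-tuple bool) (U : 'M[C]_2) (v : 'cV[C]_2) :
  CC w U *m qcast m (v *t ket R w') =
  qcast m ((if w == w' then U *m v else v) *t ket R w').
Proof.
rewrite /CC mulmx_castmx mulmxDl !tensmx_mul !mul1mx mulmxBl mul1mx !proj_ket.
by case: eqP => [<-|_]; rewrite ?scale1r ?scale0r ?subrr ?subr0 tensmx0 ?addr0 ?add0r.
Qed.

Lemma prod_CC_ket m (s : seq (m.-tuple bool)) (F : m.-tuple bool -> 'M[C]_2)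
    (v : 'cV[C]_2) (w' : m.-tuple bool) : uniq s ->
  (\prod_(w <- s) CC w (F w)) *m qcast m (v *t ket R w') =
  qcast m ((if w' \in s then F w' *m v else v) *t ket R w').
Proof.
elim: s => [|w s IH] /=; first by rewrite big_nil mul1mx.
move=> /andP[w_notin_s uniq_s].
rewrite big_cons -mulmxE -mulmxA IH // CC_ket in_cons.
by case: (eqVneq w w') => [<-|_]; rewrite ?(negbTE w_notin_s).
Qed.

Lemma Rot_qb0 a : Rot a *m qb R false = \sum_(z : bool) (Tz z a)%:C%C *: qb R z.
Proof.
apply/matrixP => i k; rewrite (ord1 k) !mxE summxE big_bool !mxE /=.
rewrite !big_ord_recl big_ord0 !mxE /= /Tz /=.
by case: i => [[|[|]]] //= _; rewrite ?expr0 ?expr1 ?mulr1 ?mul1r ?mulr0 ?addr0 ?add0r.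
Qed.

Section Embedding.
Variables n k : nat.
Hypothesis le_kn : (k <= n)%N.

Lemma embedE (A : 'M[C]_(2 ^ k)) :
  embed n k A = castmx (expn2_subnK le_kn, expn2_subnK le_kn) (1%:M *t A).
Proof. exact: conform_mxE. Qed.

Lemma embedM (A B : 'M[C]_(2 ^ k)) : embed n k A *m embed n k B = embed n k (A *m B).
Proof. by rewrite !embedE mulmx_castmx tensmx_mul mul1mx. Qed.

Lemma embed1 : embed n k (1%:M : 'M[C]_(2 ^ k)) = 1%:M.
Proof. by rewrite embedE tensmx11 castmx1. Qed.

Lemma embed_tens (A : 'M[C]_(2 ^ k)) (v : 'cV[C]_(2 ^ (n - k))) (u : 'cV[C]_(2 ^ k)) :
  embed n k A *m conform_mx (0 : 'cV[C]_(2 ^ n)) (v *t u) =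
  conform_mx (0 : 'cV[C]_(2 ^ n)) (v *t (A *m u)).
Proof.
rewrite embedE !(conform_mxE _ _ (expn2_subnK le_kn) (muln1 1)).
by rewrite mulmx_castmx tensmx_mul mul1mx.
Qed.

End Embedding.

Section Amplitudes.
Variable rho : R -> R.

Definition amp_state j : 'cV[C]_(2 ^ j) := \sum_(w : j.-tuple bool) amp rho w *: ket R w.

Lemma amp_state0 : amp_state 0 = ket0s R 0.
Proof.
rewrite /amp_state (big_pred1 [tuple]) => [|w]; last exact/esym/eqP/tuple0.
by rewrite /amp big_ord0 scale1r.
Qed.

Lemma amp_cons m z (w : m.-tuple bool) :
  amp rho [tuple of z :: w] = (Tz z (theta rho w))%:C%C * amp rho w.
Proof.
rewrite /amp big_ord_recl tnth0 /= drop0; congr (_ * _).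
by apply: eq_bigr => i _; rewrite tnthS.
Qed.

Definition Ugate_local j : 'M[C]_(2 ^ j.+1) :=
  match j with
  | 0 => Rot (theta rho [::])
  | m.+1 => \prod_(w : m.+1.-tuple bool) CC w (Rot (theta rho w))
  end.

Lemma Ugate_embed n j : (j < n)%N -> Ugate rho n j.+1 = embed n j.+1 (Ugate_local j).
Proof.
case: j => [|m] lt_jn //=.
by rewrite (big_morph _ (fun A B => esym (embedM lt_jn A B)) (embed1 lt_jn)).
Qed.

Lemma Ugate_local_ket j (w : j.-tuple bool) :
  Ugate_local j *m qcast j (qb R false *t ket R w) =
  qcast j ((Rot (theta rho w) *m qb R false) *t ket R w).
Proof.
case: j w => [|m] w /=.
  have qcast0 (v : 'cV[C]_2) : qcast 0 (v *t ket R w) = v.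
    by apply: cvnth_inj => i; rewrite cvnth_castmx (tuple0 w) cvnth_tensmx1.
  by rewrite !qcast0 (tuple0 w).
by rewrite prod_CC_ket ?index_enum_uniq // mem_index_enum.
Qed.

Lemma Ugate_local_amp_state j :
  Ugate_local j *m qcast j (qb R false *t amp_state j) = amp_state j.+1.
Proof.
rewrite /amp_state tensmx_sumr castmx_sum mulmx_sumr big_tuple_cons exchange_big.
apply: eq_bigr => w _.
rewrite tensmxZr castmxZ -scalemxAr Ugate_local_ket Rot_qb0 tensmx_suml castmx_sum.
rewrite scaler_sumr; apply: eq_bigr => z _.
by rewrite amp_cons ket_cons tensmxZl castmxZ scalerA mulrC.
Qed.

Lemma psiE n j : (j <= n)%N ->
  psi rho n j = conform_mx (0 : 'cV[C]_(2 ^ n)) (ket0s R (n - j) *t amp_state j).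
Proof.
elim: j => [_|j IH lt_jn].
  apply: cvnth_inj => i.
  by rewrite cvnth_conform_ket0s // amp_state0 !cvnth_ket0s.
rewrite -[psi rho n j.+1]/(Ugate rho n j.+1 *m psi rho n j).
rewrite (IH (ltnW lt_jn)) conform_ket0s_tensS // Ugate_embed //.
by rewrite embed_tens // Ugate_local_amp_state.
Qed.

End Amplitudes.

End Qubits.

Theorem lemma3p2 (R : realType) (n : nat) (rho : R -> R)
  (hn : (1 <= n)%N)
  (hrho0 : forall x : R, 0 <= x <= 1 -> 0 <= rho x)
  (hint : (@lebesgue_measure R).-integrable `[0, 1]%classic (EFin \o rho))
  (hone : (\int[@lebesgue_measure R]_(x in `[0%R, 1%R]%classic) (rho x)%:E = 1)%E) :
  (forall j : nat, (1 <= j <= n)%N ->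
     psi rho n j =
     conform_mx 0
       (ket0s R (n - j) *t \sum_(w : j.-tuple bool) amp rho w *: ket R w))
  /\ psi rho n n = \sum_(w : n.-tuple bool) amp rho w *: ket R w.
Proof.
split; first by move=> j /andP[_ le_jn]; exact: psiE.
by rewrite psiE //; apply: cvnth_inj; exact: cvnth_conform_ket0s.
Qed.
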